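(* Let $A=\{a_1,\dots,a_{3k}\}$ be an instance of 3-PARTITION with $a^2$ divisible by $7$, and let $G(A)$ be the bipartite network constructed from $A$ as described in the context. In any division of $G(A)$ with maximal bipartite modularity, none of the stars $X_1,\dots,X_{3k}$ and $Y_1,\dots,Y_{3k}$ is divided (i.e., all vertices of each star lie in a single community).
   Context: An instance of 3-PARTITION is a set of $3k$ positive integers $A=\{a_1,\dots,a_{3k}\}$ such that $a=\sum_{i=1}^{3k}a_i=kb$ and $b/4<a_i<b/2$ for all $i$, for some integer $b$. The bipartite network $G(A)$ (vertices colored red/blue, every edge joining a red and a blue vertex) is built as follows. (1) Construct $k$ complete bipartite networks (bicliques) $K_1,\dots,K_k$, each with $a$ red and $a$ blue vertices. (2) For each $i=1,\dots,3k$ add a red vertex $x_i$ and a blue vertex $y_i$ (element vertices). (3) For each $i$, connect $x_i$ to $a_i$ blue vertices in each of the $k$ bicliques, in such a way that each blue vertex of every biclique is adjacent to exactly one red element vertex; similarly connect $y_i$ to $a_i$ red vertices in each biclique so that each red vertex of every biclique is adjacent to exactly one blue element vertex. (4) For each $i$, add the edge $x_iy_i$. (5) For each $i$, construct a star $X_i$ with one blue internal vertex and $a^2/7$ red leaves, and a star $Y_i$ with one red internal vertex and $a^2/7$ blue leaves. (6) For each $i$, connect $x_i$ to the internal vertex of $X_i$ and $y_i$ to the internal vertex of $Y_i$. A division of the vertex set is a partition into communities. With $m$ the number of edges, Barber's bipartite modularity is $Q_b(\mathcal{C})=\sum_{C\in\mathcal{C}}\left(\frac{m_C}{m}-\frac{R_CB_C}{m^2}\right)$,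 where $m_C$ is the number of edges inside $C$ and $R_C$ (resp. $B_C$) is the sum of degrees of red (resp. blue) vertices in $C$. A division with maximal bipartite modularity is one maximizing $Q_b$ over all divisions. *)

From HB Require Import structures.
From mathcomp Require Import all_boot all_order all_algebra.
Set Implicit Arguments. Unset Strict Implicit. Unset Printing Implicit Defensive.
Import Order.TTheory GRing.Theory Num.Theory.

(* A bipartite network is given by a finite set R of red vertices, a   *)
(* finite set B of blue vertices and an edge relation e : R -> B.      *)
(* Its vertex set is R + B (inl = red, inr = blue).                    *)
Section Modularity.
Variables (R B : finType) (e : R -> B -> bool).

Definition nedges : nat := #|[set p : R * B | e p.1 p.2]|.
Definition degR (r : R) : nat := #|[set b : B | e r b]|.
Definition degB (b : B) : nat := #|[set r : R | e r b]|.

Definition edges_in (C : {set R + B}) : nat :=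
  #|[set p : R * B | [&& e p.1 p.2, inl p.1 \in C & inr p.2 \in C]]|.
Definition RC (C : {set R + B}) : nat := \sum_(r : R | inl r \in C) degR r.
Definition BC (C : {set R + B}) : nat := \sum_(b : B | inr b \in C) degB b.

Definition bimodularity (P : {set {set R + B}}) : rat :=
  \sum_(C in P) ((edges_in C)%:R / (nedges)%:R
                 - ((RC C) * (BC C))%:R / ((nedges)%:R ^+ 2))%R.

Definition division (P : {set {set R + B}}) : bool := partition P [set: R + B].

Definition max_division (P : {set {set R + B}}) : Prop :=
  division P /\
  forall P' : {set {set R + B}}, division P' -> (bimodularity P' <= bimodularity P)%R.

End Modularity.

(* Both colour classes have the same shape:                            *)
(*   side = 'I_k * 'I_n      (biclique vertices: (biclique l, index j)) *)
(*        + 'I_(3k)          (element vertices x_i resp. y_i)           *)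
(*        + 'I_(3k) * 'I_s   (star leaves: red leaves of X_i,           *)
(*                            resp. blue leaves of Y_i)                 *)
(*        + 'I_(3k)          (star centres: red centre of Y_i,          *)
(*                            resp. blue centre of X_i)                 *)
(* with n = a (biclique side size) and s = a^2/7 (number of leaves).   *)
Definition side (k n s : nat) : finType :=
  ((('I_k * 'I_n) + 'I_(3 * k)) + ('I_(3 * k) * 'I_s) + 'I_(3 * k))%type.

Definition bq {k n s} (l : 'I_k) (j : 'I_n) : side k n s := inl (inl (inl (l, j))).
Definition elt {k n s} (i : 'I_(3 * k)) : side k n s := inl (inl (inr i)).
Definition leaf {k n s} (i : 'I_(3 * k)) (t : 'I_s) : side k n s := inl (inr (i, t)).
Definition ctr {k n s} (i : 'I_(3 * k)) : side k n s := inr i.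

(* f l j = i : blue vertex j of biclique l is adjacent to x_i;
   g l j = i : red vertex j of biclique l is adjacent to y_i. *)
Definition GA_edge (k n s : nat) (f g : 'I_k -> 'I_n -> 'I_(3 * k))
    (r b : side k n s) : bool :=
  match r, b with
  (* (1) bicliques K_l *)
  | inl (inl (inl (l, _))), inl (inl (inl (l', _))) => l == l'
  (* (3) x_i -- blue biclique vertices *)
  | inl (inl (inr i)), inl (inl (inl (l, j))) => f l j == i
  (* (3) red biclique vertices -- y_i *)
  | inl (inl (inl (l, j))), inl (inl (inr i)) => g l j == i
  (* (4) x_i -- y_i *)
  | inl (inl (inr i)), inl (inl (inr i')) => i == i'
  (* (6) x_i -- centre of X_i *)
  | inl (inl (inr i)), inr i' => i == i'
  (* (5) red leaves of X_i -- centre of X_i *)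
  | inl (inr (i, _)), inr i' => i == i'
  (* (6) centre of Y_i -- y_i *)
  | inr i, inl (inl (inr i')) => i == i'
  (* (5) centre of Y_i -- blue leaves of Y_i *)
  | inr i, inl (inr (i', _)) => i == i'
  | _, _ => false
  end.

Definition asum k (A : 'I_(3 * k) -> nat) : nat := \sum_(i < 3 * k) A i.

Definition three_partition_instance k (b : nat) (A : 'I_(3 * k) -> nat) : Prop :=
  asum A = k * b /\ forall i, [/\ 0 < A i, b < 4 * A i & 2 * A i < b].

(* step (3): each x_i is adjacent to exactly a_i blue vertices of every
   biclique (each blue biclique vertex to exactly one x_i, automatic since f
   is a function); similarly for y_i and g. *)
Definition valid_assignment k n (A : 'I_(3 * k) -> nat)
    (f : 'I_k -> 'I_n -> 'I_(3 * k)) : Prop :=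
  forall (l : 'I_k) (i : 'I_(3 * k)), #|[set j : 'I_n | f l j == i]| = A i.

Definition starX k n s (i : 'I_(3 * k)) : {set side k n s + side k n s} :=
  inr (ctr i) |: [set inl (leaf i t) | t : 'I_s].
Definition starY k n s (i : 'I_(3 * k)) : {set side k n s + side k n s} :=
  inl (ctr i) |: [set inr (leaf i t) | t : 'I_s].

From HB Require Import structures.
From mathcomp Require Import all_boot all_order all_algebra.
From mathcomp Require Import ring lra.
Set Implicit Arguments. Unset Strict Implicit. Unset Printing Implicit Defensive.
Import Order.TTheory GRing.Theory Num.Theory.

(* Every leaf of the star X_i is a red vertex whose only neighbour is the
   centre of X_i, and dually for Y_i (handled by exchanging the colours).  So it
   suffices that, in a division of maximal bipartite modularity, a pendant
   vertex v lies in the community D of its neighbour u.  If v lies in another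
   community C, moving v into D changes Q_b by (m + B_C - B_D) / m^2, which is
   positive unless B_D = m.  But then every other community has B = 0, whence
   Q_b <= 0, whereas the division {{v, u}, rest} has positive modularity as soon
   as some edge avoids u (in G(A), the edge x_i y_i). *)

Lemma block_of_star (T : finType) (P : {set {set T}}) (c : T) (L : {set T}) :
  partition P setT ->
  (forall x, x \in L -> exists2 C, C \in P & (x \in C) && (c \in C)) ->
  exists2 C, C \in P & c |: L \subset C.
Proof.
move=> partP sameL; have tiP := partition_trivIset partP.
have cP : c \in cover P by rewrite (cover_partition partP) inE.
exists (pblock P c); first exact: pblock_mem.
apply/subsetP => x; rewrite in_setU1 => /predU1P[->|xL]; first by rewrite mem_pblock.
have [C CP /andP[xC cC]] := sameL x xL.
by rewrite (def_pblock tiP CP cC).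
Qed.

Section Modularity.
Variables (R B : finType) (e : R -> B -> bool).
Local Notation V := (R + B)%type.
Local Notation m := (nedges e).

Definition community_score (X : {set V}) : rat :=
  ((edges_in e X)%:R / m%:R - (RC e X * BC e X)%:R / m%:R ^+ 2)%R.

Lemma bimodularityE P : bimodularity e P = (\sum_(X in P) community_score X)%R.
Proof. by []. Qed.

Lemma community_score0 : community_score set0 = 0%R.
Proof.
rewrite /community_score /edges_in /RC /BC.
rewrite (eq_card0 (A := [set p : R * B | _])) => [|p]; last by rewrite !inE !andbF.
by rewrite !big_pred0 ?mul0r ?subrr // => x; rewrite inE.
Qed.

Lemma card_edges_red (a : pred R) :
  #|[set p : R * B | e p.1 p.2 && a p.1]| = \sum_(r | a r) degR e r.
Proof.
rewrite -sum1_card.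
have -> : \sum_(r | a r) degR e r = \sum_(r | a r) \sum_(b | e r b) 1.
  by apply: eq_bigr => r _; rewrite /degR -sum1_card; apply: eq_bigl => b; rewrite inE.
by rewrite pair_big_dep; apply: eq_bigl => p; rewrite !inE andbC.
Qed.

Lemma card_edges_blue (a : pred B) :
  #|[set p : R * B | e p.1 p.2 && a p.2]| = \sum_(b | a b) degB e b.
Proof.
rewrite -sum1_card.
have -> : \sum_(b | a b) degB e b = \sum_(b | a b) \sum_(r | e r b) 1.
  by apply: eq_bigr => b _; rewrite /degB -sum1_card; apply: eq_bigl => r; rewrite inE.
rewrite (exchange_big_dep predT) //= pair_big_dep; apply: eq_bigl => p.
by rewrite !inE /=; case: (e _ _); case: (a _).
Qed.

Lemma RC_card_edges X : RC e X = #|[set p : R * B | e p.1 p.2 && (inl p.1 \in X)]|.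
Proof. by rewrite (card_edges_red (fun r => inl r \in X)). Qed.

Lemma BC_card_edges X : BC e X = #|[set p : R * B | e p.1 p.2 && (inr p.2 \in X)]|.
Proof. by rewrite (card_edges_blue (fun b => inr b \in X)). Qed.

Lemma RC_setC X : (RC e X + RC e (~: X) = m)%N.
Proof.
rewrite /nedges (eq_card (B := [set p : R * B | e p.1 p.2 && predT p.1])) => [|p]; last first.
  by rewrite !inE andbT.
rewrite card_edges_red (bigID (fun r => inl r \in X)) /=.
by congr (_ + _); apply: eq_bigl => r; rewrite inE.
Qed.

Lemma BC_setC X : (BC e X + BC e (~: X) = m)%N.
Proof.
rewrite /nedges (eq_card (B := [set p : R * B | e p.1 p.2 && predT p.2])) => [|p]; last first.
  by rewrite !inE andbT.
rewrite card_edges_blue (bigID (fun b => inr b \in X)) /=.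
by congr (_ + _); apply: eq_bigl => b; rewrite inE.
Qed.

Lemma subset_BC (X Y : {set V}) : X \subset Y -> BC e X <= BC e Y.
Proof.
move=> sXY; rewrite !BC_card_edges; apply: subset_leq_card; apply/subsetP => p.
by rewrite !inE => /andP[-> /(subsetP sXY)].
Qed.

Lemma edges_in_le_RC X : edges_in e X <= RC e X.
Proof.
rewrite RC_card_edges; apply: subset_leq_card; apply/subsetP => p.
by rewrite !inE => /and3P[-> -> _].
Qed.

Lemma edges_in_le_BC X : edges_in e X <= BC e X.
Proof.
rewrite BC_card_edges; apply: subset_leq_card; apply/subsetP => p.
by rewrite !inE => /and3P[-> _ ->].
Qed.

Lemma community_score_BC0 X : BC e X = 0%N -> community_score X = 0%R.
Proof.
move=> BX0; have := edges_in_le_BC X; rewrite BX0 leqn0 => /eqP eX0.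
by rewrite /community_score eX0 BX0 muln0 !mul0r subrr.
Qed.

Lemma community_score_BC_full X : BC e X = m -> (community_score X <= 0)%R.
Proof.
move=> BXm; rewrite /community_score BXm natrM.
have [->|m_gt0] := posnP m; first by rewrite invr0 !mulr0 subrr.
have mR : (m%:R : rat) != 0%R by rewrite pnatr_eq0 -lt0n.
rewrite expr2 invfM mulrA mulfK // -mulrBl pmulr_lle0 ?invr_gt0 ?ltr0n //.
by rewrite subr_le0 ler_nat edges_in_le_RC.
Qed.

Lemma bimodularity_le0 P D :
  trivIset P -> D \in P -> BC e D = m -> (bimodularity e P <= 0)%R.
Proof.
move=> tiP DP BDm; rewrite bimodularityE (bigD1 D) //= big1 ?addr0.
  exact: community_score_BC_full.
move=> X /andP[XP XD]; apply: community_score_BC0; apply/eqP; rewrite -leqn0.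
have : BC e (~: D) = 0%N by apply/eqP; rewrite -(eqn_add2l m) addn0 -{1}BDm BC_setC.
move=> <-; apply: subset_BC; rewrite -disjoints_subset.
exact: (trivIsetP tiP).
Qed.

Definition fiber (T : finType) (lab : V -> T) (t : T) : {set V} := [set y | lab y == t].

Lemma bimodularity_preim (T : finType) (lab : V -> T) :
  bimodularity e (preim_partition lab setT) = (\sum_t community_score (fiber lab t))%R.
Proof.
have -> : preim_partition lab setT = [set fiber lab t | t in [set lab x | x in setT]].
  rewrite /preim_partition /equivalence_partition -imset_comp.
  by apply: eq_imset => x; apply/setP => y; rewrite !inE eq_sym.
rewrite bimodularityE big_imset => [|t1 t2 /imsetP[x _ ->] _ fib12]; last first.
  have : x \in fiber lab (lab x) by rewrite inE.
  by rewrite fib12 inE => /eqP.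
rewrite [RHS](bigID (fun t => t \in [set lab x | x in setT])) /=.
rewrite [X in (_ + X)%R]big1 ?addr0 // => t labt.
rewrite -community_score0; congr community_score; apply/setP => y; rewrite !inE.
by apply: contraNF labt => /eqP <-; apply: imset_f.
Qed.

Lemma bimodularity_pblock P :
  partition P setT -> bimodularity e P = (\sum_t community_score (fiber (pblock P) t))%R.
Proof. by move=> partP; rewrite -{1}(preim_partition_pblock partP) bimodularity_preim. Qed.

Lemma bimodularity_bipartition (S : {set V}) :
  bimodularity e (preim_partition (fun y => y \in S) setT) =
  (community_score S + community_score (~: S))%R.
Proof.
rewrite bimodularity_preim big_bool /=.
by congr (community_score _ + community_score _)%R; apply/setP => y; rewrite !inE ?eqb_id ?eqbF_neg.
Qed.

Lemma bimodularity_move P x y : partition P setT -> pblock P x != pblock P y ->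
  let C := pblock P x in let D := pblock P y in
  exists2 P', division P' &
  bimodularity e P' = (bimodularity e P + (community_score (C :\ x)
    + community_score (x |: D) - community_score C - community_score D))%R.
Proof.
move=> partP nCD C D; pose lab z := if z == x then D else pblock P z.
exists (preim_partition lab setT); first exact: preim_partitionP.
have tiP := partition_trivIset partP.
have inP z : z \in cover P by rewrite (cover_partition partP) inE.
have fiber_pblock z : fiber (pblock P) (pblock P z) = pblock P z.
  by apply/setP => w; rewrite inE eq_sym eq_pblock ?inP.
have fiberC : fiber lab C = C :\ x.
  apply/setP => z; rewrite !inE /lab; case: (eqVneq z x) => [->|_] /=.
    by rewrite eq_sym (negbTE nCD).
  by rewrite eq_sym eq_pblock ?inP.
have fiberD : fiber lab D = x |: D.
  apply/setP => z; rewrite !inE /lab; case: (eqVneq z x) => [->|_] /=; first by rewrite eqxx.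
  by rewrite eq_sym eq_pblock ?inP.
have fiber_other t : t != C -> t != D -> fiber lab t = fiber (pblock P) t.
  move=> tC tD; apply/setP => z; rewrite !inE /lab.
  by case: (eqVneq z x) => [->|_] //=; rewrite -/C !(eq_sym _ t) (negbTE tD) (negbTE tC).
have splitCD (F : {set V} -> rat) :
    (\sum_t F t = F C + (F D + \sum_(t | (t != C) && (t != D)) F t))%R.
  by rewrite (bigD1 C) // (bigD1 D) //= eq_sym.
rewrite bimodularity_preim (bimodularity_pblock partP).
rewrite (splitCD (fun t => community_score (fiber lab t))).
rewrite (splitCD (fun t => community_score (fiber (pblock P) t))) /=.
rewrite fiberC fiberD !fiber_pblock -/C -/D.
rewrite (eq_bigr (fun t => community_score (fiber (pblock P) t))) => [|t /andP[tC tD]]; last first.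
  by rewrite fiber_other.
by ring.
Qed.

Lemma degB_card_edges (u : B) : degB e u = #|[set p : R * B | e p.1 p.2 && (p.2 == u)]|.
Proof. by rewrite (card_edges_blue (pred1 u)) big_pred1_eq. Qed.

Lemma degB_lt_nedges (u : B) r0 b0 : e r0 b0 -> b0 != u -> (degB e u < m)%N.
Proof.
move=> e0 b0u; rewrite degB_card_edges; apply: proper_card; apply/properP; split.
  by apply/subsetP => p; rewrite !inE => /andP[].
by exists (r0, b0); rewrite !inE ?e0 // (negbTE b0u) andbF.
Qed.

Section Pendant.
Variables (v : R) (u : B).
Hypothesis pendant : forall b, e v b = (b == u).

Lemma degR_pendant : degR e v = 1%N.
Proof.
by rewrite /degR (eq_card (B := [set u])) ?cards1 // => b; rewrite !inE pendant.
Qed.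

Lemma nedges_pendant_gt0 : (0 < m)%N.
Proof. by rewrite /nedges card_gt0; apply/set0Pn; exists (v, u); rewrite inE /= pendant. Qed.

(* The only edge of v goes to u, so moving v from C to D adds one edge inside D
   and transfers one unit of red degree from C to D. *)
Lemma community_score_move_pendant (C D : {set V}) :
  inl v \in C -> inr u \notin C -> inl v \notin D -> inr u \in D ->
  (community_score (C :\ inl v) + community_score (inl v |: D)
   - community_score C - community_score D =
   (m%:R + (BC e C)%:R - (BC e D)%:R) / m%:R ^+ 2)%R.
Proof.
move=> vC uC vD uD.
have edgesC : edges_in e (C :\ inl v) = edges_in e C.
  apply: eq_card => -[r b]; rewrite !inE /= -!sum_eqE /=.
  case: (eqVneq r v) => [->|_] //=; rewrite pendant vC andbF.
  by case: eqP => //= ->; rewrite (negbTE uC).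
have edgesD : edges_in e (inl v |: D) = (1 + edges_in e D)%N.
  rewrite /edges_in (_ : [set p | _] = (v, u) |: [set p : R * B | [&& e p.1 p.2,
    inl p.1 \in D & inr p.2 \in D]]); first by rewrite cardsU1 inE /= (negbTE vD) andbF.
  apply/setP => -[r b]; rewrite !inE /= xpair_eqE -!sum_eqE /=.
  case: (eqVneq r v) => [->|_] /=; last by [].
  by rewrite pendant (negbTE vD) /= andbF orbF; case: eqP => [->|] //=; rewrite uD.
have RCC : RC e C = (1 + RC e (C :\ inl v))%N.
  rewrite /RC (bigD1 v) //= degR_pendant; congr (_ + _)%N; apply: eq_bigl => r.
  by rewrite !inE andbC.
have RCD : RC e (inl v |: D) = (1 + RC e D)%N.
  rewrite /RC (bigD1 v) /= ?inE ?eqxx // degR_pendant; congr (_ + _)%N.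
  apply: eq_bigl => r; rewrite !inE /= -!sum_eqE /=.
  by case: (eqVneq r v) => [->|_]; rewrite ?eqxx /= ?andbT ?(negbTE vD).
have BCC : BC e (C :\ inl v) = BC e C by apply: eq_bigl => b; rewrite !inE.
have BCD : BC e (inl v |: D) = BC e D by apply: eq_bigl => b; rewrite !inE.
have mR : (m%:R : rat) != 0%R by rewrite pnatr_eq0 -lt0n nedges_pendant_gt0.
rewrite /community_score edgesC edgesD RCC RCD BCC BCD !natrM !natrD.
by field.
Qed.

Definition pendant_pair : {set V} := [set inl v; inr u].

Lemma edges_in_pendant_pair : edges_in e pendant_pair = 1%N.
Proof.
rewrite /edges_in (eq_card (B := [set (v, u)])) ?cards1 // => -[r b].
rewrite in_set1 in_set !inE -!sum_eqE /= orbF xpair_eqE.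
by case: (eqVneq r v) => [->|_]; rewrite ?andbF //= pendant andbb.
Qed.

Lemma RC_pendant_pair : RC e pendant_pair = 1%N.
Proof.
by rewrite /RC (eq_bigl (pred1 v)) ?big_pred1_eq ?degR_pendant // => r; rewrite !inE orbF.
Qed.

Lemma BC_pendant_pair : BC e pendant_pair = degB e u.
Proof. by rewrite /BC (eq_bigl (pred1 u)) ?big_pred1_eq // => b; rewrite !inE. Qed.

Lemma nedges_le_edges_in_pendant_compl :
  (m <= edges_in e (~: pendant_pair) + degB e u)%N.
Proof.
rewrite degB_card_edges /edges_in.
apply: leq_trans (leq_card_setU _ _); apply: subset_leq_card.
apply/subsetP => -[r b]; rewrite !inE -!sum_eqE /= orbF => erb; rewrite erb /=.
case: (eqVneq b u) => [_|bu]; rewrite ?orbT // orbF andbT.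
by apply: contraTneq erb => ->; rewrite pendant (negbTE bu).
Qed.

Lemma community_score_pendant_pair r0 b0 : e r0 b0 -> b0 != u ->
  (0 < community_score pendant_pair + community_score (~: pendant_pair))%R.
Proof.
move=> e0 b0u; have m_gt0 : (0 < m%:R :> rat)%R by rewrite ltr0n nedges_pendant_gt0.
have := nedges_le_edges_in_pendant_compl; have := degB_lt_nedges e0 b0u.
have := RC_setC pendant_pair; have := BC_setC pendant_pair.
rewrite /community_score edges_in_pendant_pair RC_pendant_pair BC_pendant_pair !natrM.
move: (edges_in e (~: pendant_pair)) (RC e (~: pendant_pair)) (BC e (~: pendant_pair)).
move: (degB e u) => d x y z.
rewrite -(ltr_nat rat) -(ler_nat rat) => /(congr1 (GRing.natmul (1 : rat))) eq_z.
move=> /(congr1 (GRing.natmul (1 : rat))) eq_y.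
rewrite !natrD in eq_y eq_z *; move: eq_y eq_z m_gt0.
move: (m%:R : rat) (x%:R : rat) (y%:R : rat) (z%:R : rat) (d%:R : rat).
move=> M X Y Z Dd eq_Y eq_Z M_gt0 lt_D le_M.
(* With Y = M - 1, Z = M - Dd and X >= M - Dd the numerator is at least 2 (M - Dd). *)
rewrite (_ : _ + _ = (M - Dd + M * X - Y * Z) / M ^+ 2)%R; last by field; rewrite gt_eqF.
by apply: divr_gt0; [nra | rewrite exprn_gt0].
Qed.

Lemma pendant_with_neighbour P r0 b0 : max_division e P -> e r0 b0 -> b0 != u ->
  exists2 C, C \in P & (inl v \in C) && (inr u \in C).
Proof.
move=> [partP maxP] e0 b0u; have tiP := partition_trivIset partP.
have inP z : z \in cover P by rewrite (cover_partition partP) inE.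
set C := pblock P (inl v); set D := pblock P (inr u).
have vC : inl v \in C by rewrite mem_pblock.
have uD : inr u \in D by rewrite mem_pblock.
have [eCD|nCD] := eqVneq C D; first by exists C; rewrite ?pblock_mem ?vC ?eCD.
have uC : inr u \notin C by apply: contra nCD => uC; rewrite /D (def_pblock tiP _ uC) ?pblock_mem.
have vD : inl v \notin D by apply: contra nCD => vD; rewrite /C (def_pblock tiP _ vD) ?pblock_mem.
have [P' /maxP le_P' eq_P'] := bimodularity_move partP nCD.
rewrite -/C -/D community_score_move_pendant // in eq_P'; rewrite eq_P' in le_P'.
have m_gt0 : (0 < m%:R :> rat)%R by rewrite ltr0n nedges_pendant_gt0.
case: (ltnP (BC e D) (m + BC e C)) => BD.
  suff : (0 < (m%:R + (BC e C)%:R - (BC e D)%:R) / m%:R ^+ 2 :> rat)%R by move: le_P'; lra.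
  by rewrite divr_gt0 ?exprn_gt0 // -natrD subr_gt0 ltr_nat.
have BDm : BC e D = m.
  by apply/eqP; rewrite eqn_leq (leq_trans (leq_addr _ _) BD) -{1}(BC_setC D) leq_addr.
have := maxP _ (preim_partitionP (fun y => y \in pendant_pair) setT).
rewrite bimodularity_bipartition.
have := bimodularity_le0 tiP (pblock_mem (inP (inr u))) BDm.
have := community_score_pendant_pair e0 b0u; lra.
Qed.

End Pendant.

Lemma pendant_star_red P (I : finType) (u : B) (leaf : I -> R) r0 b0 :
  max_division e P -> (forall t b, e (leaf t) b = (b == u)) -> e r0 b0 -> b0 != u ->
  exists2 C, C \in P & inr u |: [set inl (leaf t) | t : I] \subset C.
Proof.
move=> maxP leafP e0 b0u; apply: block_of_star; first by case: maxP.
by move=> _ /imsetP[t _ ->]; exact: (pendant_with_neighbour (leafP t) maxP e0 b0u).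
Qed.

End Modularity.

Definition swap_sum {T1 T2 : Type} (x : T1 + T2) : T2 + T1 :=
  match x with inl y => inr y | inr z => inl z end.

Lemma swap_sumK (T1 T2 : Type) : cancel (@swap_sum T1 T2) (@swap_sum T2 T1).
Proof. by case. Qed.

Section Swap.
Variables (R B : finType) (e : R -> B -> bool).
Local Notation V := (R + B)%type.
Local Notation swap_set X := [set swap_sum x | x in (X : {set V})].
Local Notation swap_div P := [set swap_set X | X in (P : {set {set V}})].
Local Notation e' := (fun b r => e r b).

Lemma mem_swap_set (X : {set V}) x : (swap_sum x \in swap_set X) = (x \in X).
Proof. exact: (mem_imset _ _ (can_inj (@swap_sumK R B))). Qed.

Lemma card_set_swap (Q : R * B -> bool) :
  #|[set p : B * R | Q (p.2, p.1)]| = #|[set p : R * B | Q p]|.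
Proof.
have swapK : cancel (fun p : R * B => (p.2, p.1)) (fun p : B * R => (p.2, p.1)) by case.
rewrite -(card_imset _ (can_inj swapK)); apply: eq_card => -[b r].
rewrite inE; apply/idP/imsetP => [Qrb|[[r' b'] Qrb' [-> ->]]]; last by rewrite inE in Qrb'.
by exists (r, b); rewrite ?inE.
Qed.

Lemma nedges_swap : nedges e' = nedges e.
Proof. exact: (card_set_swap (fun p => e p.1 p.2)). Qed.

Lemma edges_in_swap (X : {set V}) : edges_in e' (swap_set X) = edges_in e X.
Proof.
rewrite /edges_in -(card_set_swap (fun p => [&& e p.1 p.2, inl p.1 \in X & inr p.2 \in X])).
apply: eq_card => -[b r]; rewrite !inE /=.
rewrite -[inl b]/(swap_sum (inr b)) -[inr r]/(swap_sum (inl r)) !mem_swap_set.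
by case: (e r b); case: (inr b \in X); case: (inl r \in X).
Qed.

Lemma RC_swap (X : {set V}) : RC e' (swap_set X) = BC e X.
Proof. by apply: eq_bigl => b; rewrite -[inl b]/(swap_sum (inr b)) mem_swap_set. Qed.

Lemma BC_swap (X : {set V}) : BC e' (swap_set X) = RC e X.
Proof. by apply: eq_bigl => r; rewrite -[inr r]/(swap_sum (inl r)) mem_swap_set. Qed.

Lemma bimodularity_swap (P : {set {set V}}) : bimodularity e' (swap_div P) = bimodularity e P.
Proof.
rewrite /bimodularity big_imset => [|X Y _ _]; last exact: (imset_inj (can_inj (@swap_sumK R B))).
by apply: eq_bigr => X _; rewrite edges_in_swap RC_swap BC_swap nedges_swap mulnC.
Qed.

Lemma division_swap (P : {set {set V}}) : division P -> division (swap_div P).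
Proof.
rewrite /division; have -> : [set: B + R] = swap_sum @: [set: V].
  by apply/setP => y; rewrite inE -[y](@swap_sumK B R) mem_swap_set inE.
by rewrite imset_partition //; apply: can_inj (@swap_sumK R B).
Qed.

End Swap.

Lemma max_division_swap (R B : finType) (e : R -> B -> bool) (P : {set {set R + B}}) :
  max_division e P ->
  max_division (fun b r => e r b) [set swap_sum @: (X : {set R + B}) | X in P].
Proof.
move=> [divP maxP]; split=> [|P' divP']; first exact: division_swap.
have -> : P' = [set swap_sum @: (X : {set R + B}) | X in [set swap_sum @: (X : {set B + R}) | X in P']].
  rewrite -imset_comp -[LHS]imset_id; apply: eq_imset => X /=.
  by rewrite -imset_comp -[LHS]imset_id; apply: eq_imset => x /=; rewrite swap_sumK.
rewrite (bimodularity_swap e P) (bimodularity_swap e [set swap_sum @: (X : {set B + R}) | X in P']).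
by apply: maxP; apply: division_swap.
Qed.

Lemma pendant_star_blue (R B : finType) (e : R -> B -> bool) P (I : finType) (u : R)
    (leaf : I -> B) r0 b0 :
  max_division e P -> (forall t r, e r (leaf t) = (r == u)) -> e r0 b0 -> r0 != u ->
  exists2 C, C \in P & inl u |: [set inr (leaf t) | t : I] \subset C.
Proof.
move=> /max_division_swap maxP leafP e0 r0u.
have [C' /imsetP[C CP ->] sub'] := pendant_star_red maxP leafP e0 r0u.
exists C => //; apply/subsetP => x; rewrite -(mem_swap_set C x) => xS.
apply: (subsetP sub'); case/setU1P: xS => [->|/imsetP[t _ ->]]; first exact: setU11.
by apply/setU1r/imset_f.
Qed.

Section StarNetwork.
Variables (k n s : nat) (f g : 'I_k -> 'I_n -> 'I_(3 * k)).
Local Notation E := (@GA_edge k n s f g).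

Lemma GA_edge_leaf_red i t b : E (leaf i t) b = (b == ctr i).
Proof. by case: b => [[[[l j]|i']|[i' t']]|i'] //=; rewrite eq_sym. Qed.

Lemma GA_edge_leaf_blue i t r : E r (leaf i t) = (r == ctr i).
Proof. by case: r => [[[[l j]|i']|[i' t']]|i']. Qed.

Lemma GA_edge_elt i : E (elt i) (elt i).
Proof. exact: eqxx. Qed.

End StarNetwork.

Theorem lemma3 (k b : nat) (A : 'I_(3 * k) -> nat)
    (f g : 'I_k -> 'I_(asum A) -> 'I_(3 * k))
    (P : {set {set side k (asum A) ((asum A) ^ 2 %/ 7)
                   + side k (asum A) ((asum A) ^ 2 %/ 7)}}) :
  three_partition_instance b A ->
  7 %| (asum A) ^ 2 ->
  valid_assignment A f -> valid_assignment A g ->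
  max_division (@GA_edge k (asum A) ((asum A) ^ 2 %/ 7) f g) P ->
  forall i : 'I_(3 * k),
    (exists2 C, C \in P & starX (asum A) ((asum A) ^ 2 %/ 7) i \subset C) /\
    (exists2 C, C \in P & starY (asum A) ((asum A) ^ 2 %/ 7) i \subset C).
Proof.
move=> _ _ _ _ maxP i; split.
- exact: pendant_star_red maxP (GA_edge_leaf_red f g i) (GA_edge_elt _ f g i) _.
- exact: pendant_star_blue maxP (GA_edge_leaf_blue f g i) (GA_edge_elt _ f g i) _.
Qed.
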